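(* Let $a>0$, $B_u>0$, $B_v\neq0$, $\Delta x\in(0,1]$, $\varepsilon>0$, let $(\alpha,\beta)$ be a SAT-parameter (defined in the context), and assume $2aB_v+\tfrac{\Delta x}{\varepsilon}B_u>0$. Consider the inequality $$\sqrt{2a|B_v\alpha|}<\sqrt{-\bigl(2aB_v+\tfrac{\Delta x}{\varepsilon}B_u\bigr)\alpha}.\qquad(\ast)$$ (a) If $B_v>0$, then $(\ast)$ holds (for all such $\Delta x,\varepsilon$). (b) If $B_v<0$, then for any $\delta_0>-4aB_u^{-1}B_v$, $(\ast)$ holds whenever $\Delta x\geq\delta_0\varepsilon$.
   Context: SAT-parameter: given $a>0$, $B_u>0$, $B_v\neq 0$, a pair $(\alpha,\beta)\in\mathbb{R}^2$ is a SAT-parameter if $\alpha<(3+2\sqrt2)\min(B_v^{-1},0)$ and $-a(1-B_v\alpha)-2a\sqrt{|B_v\alpha|}<\beta B_u<-a(1-B_v\alpha)+2a\sqrt{|B_v\alpha|}$. *)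

From Stdlib Require Import Reals Lra.
Open Scope R_scope.

Definition SAT_parameter (a Bu Bv alpha beta : R) : Prop :=
  alpha < (3 + 2 * sqrt 2) * Rmin (/ Bv) 0 /\
  - a * (1 - Bv * alpha) - 2 * a * sqrt (Rabs (Bv * alpha)) < beta * Bu /\
  beta * Bu < - a * (1 - Bv * alpha) + 2 * a * sqrt (Rabs (Bv * alpha)).

Definition ineq_star (a Bu Bv dx eps alpha : R) : Prop :=
  sqrt (2 * a * Rabs (Bv * alpha)) < sqrt (- (2 * a * Bv + dx / eps * Bu) * alpha).

From Stdlib Require Import Reals Lra.
Open Scope R_scope.

(* The SAT condition forces alpha < 0, so with k = dx / eps inequality (star)
   reads 2 a |B_v| |alpha| < (2 a B_v + k B_u) |alpha|, i.e. 2 a |B_v| < 2 a B_v + k B_u.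
   For B_v > 0 this is k B_u > 0; for B_v < 0 it is -4 a B_v < k B_u, which follows
   from k >= delta0 > -4 a B_v / B_u. *)

Lemma SAT_parameter_alpha_lt0 (a Bu Bv alpha beta : R) :
  SAT_parameter a Bu Bv alpha beta -> alpha < 0.
Proof.
  intros [halpha _].
  assert (0 <= sqrt 2) by apply sqrt_pos.
  assert (Rmin (/ Bv) 0 <= 0) by apply Rmin_r.
  nra.
Qed.

Lemma ineq_star_of_coef_lt (a Bu Bv dx eps alpha : R) :
  0 <= a -> alpha < 0 ->
  2 * a * Rabs Bv < 2 * a * Bv + dx / eps * Bu ->
  ineq_star a Bu Bv dx eps alpha.
Proof.
  intros ha halpha hcoef.
  unfold ineq_star.
  rewrite Rabs_mult, (Rabs_left alpha) by exact halpha.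
  assert (0 <= 2 * a * Rabs Bv) by (assert (0 <= Rabs Bv) by apply Rabs_pos; nra).
  apply sqrt_lt_1; nra.
Qed.

Lemma le_div_of_mul_le (d x e : R) : 0 < e -> d * e <= x -> d <= x / e.
Proof.
  intros he hle.
  apply (Rmult_le_reg_r e); [exact he |].
  unfold Rdiv; rewrite Rmult_assoc, Rinv_l, Rmult_1_r; lra.
Qed.

Theorem lemma3 (a Bu Bv dx eps alpha beta : R) :
  0 < a -> 0 < Bu -> Bv <> 0 -> 0 < dx <= 1 -> 0 < eps ->
  SAT_parameter a Bu Bv alpha beta ->
  0 < 2 * a * Bv + dx / eps * Bu ->
  (0 < Bv -> ineq_star a Bu Bv dx eps alpha) /\
  (Bv < 0 -> forall delta0 : R, - 4 * a * / Bu * Bv < delta0 ->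
     delta0 * eps <= dx -> ineq_star a Bu Bv dx eps alpha).
Proof.
  intros ha hu _ hdx he hsat _.
  pose proof (SAT_parameter_alpha_lt0 _ _ _ _ _ hsat) as halpha.
  assert (hk : 0 < dx / eps) by (apply Rdiv_lt_0_compat; lra).
  split.
  - intros hv.
    apply ineq_star_of_coef_lt; [lra | exact halpha |].
    rewrite Rabs_right by lra.
    nra.
  - intros hv delta0 hdelta0 hmesh.
    apply ineq_star_of_coef_lt; [lra | exact halpha |].
    rewrite Rabs_left by exact hv.
    pose proof (le_div_of_mul_le _ _ _ he hmesh) as hdelta0_k.
    assert (hscaled : - 4 * a * Bv = - 4 * a * / Bu * Bv * Bu) by (field; lra).
    nra.
Qed.
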